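(* Suppose a strategy is relative growth optimal for investor $m$, and consider any feasible strategy profile and initial wealth $y_0\in\mathbb{R}^M_{++}$ in which investor $m$ uses it, with wealth process $Y$. Then investor $m$ survives in the sense that $\inf_{t\ge0}r^m_t>0$ a.s., and for every investor $k$, $$\limsup_{t\to\infty}\frac1t\ln Y^m_t\ \ge\ \limsup_{t\to\infty}\frac1t\ln Y^k_t\quad\text{a.s.}$$
   Context: Setting: $(\Omega,\mathcal{F},\mathbb{F}=(\mathcal{F}_t)_{t\ge0},\mathbb{P})$ filtered probability space with usual conditions, $\mathcal{P}$ predictable $\sigma$-algebra. $|x|=\sum_n|x^n|$; for $x\in\mathbb{R}^{MN}$, $x^m=(x^{m,n})_n$, $x^{\cdot,n}=(x^{m,n})_m$. $M\ge2$ investors, $N\ge1$ assets. Payoff process $X$: adapted, nondecreasing, càdlàg, $\mathbb{R}^N_+$-valued, $X_0=0$; $X^c_t=X_t-\sum_{0<s\le t}\Delta X_s$; $\nu$ the compensator of its jump measure; $G_t=|X^c_t|+(|x|\wedge1)*\nu_t$. Strategies: $D$ = càdlàg $y\colon\mathbb{R}_+\to\mathbb{R}^M_+$, $\mathcal{D}_t=\sigma(y_u,u\le t)$, $E=\Omega\times D$, $\mathcal{E}_t=\mathcal{F}_t\otimes\mathcal{D}_t$, $\mathcal{P}^E$ the $\sigma$-algebra on $E\times\mathbb{R}_+$ generated by measurable functions left-continuous in $t$ and $\mathcal{E}_t$-measurable for fixed $t$. A strategy is a $\mathcal{P}^E$-measurable $\boldsymbol{L}_t(\omega,y)\in\mathbb{R}^N_+$,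 $\boldsymbol{L}_0=0$, nondecreasing càdlàg in $t$. Feasibility: for predictable nondecreasing càdlàg $H$ with $G\ll H$, $dL/dH$ is a predictable version of the Lebesgue derivative of the measure $\mathbb{P}\otimes L(A)=\mathbb{E}\int\mathbb{1}_A\,dL$ w.r.t. $\mathbb{P}\otimes H$ on $\mathcal{P}$. A profile $(\boldsymbol{L}^1,\dots,\boldsymbol{L}^M)$ and $y_0\in\mathbb{R}^M_{++}$ are feasible if there is a unique (up to indistinguishability) nonnegative càdlàg adapted $\mathbb{R}^M_+$-valued process $Y$ such that (1) for each $m$, a.s. for all $t$, $Y^m_t=y^m_0-|L^m_t|+\sum_n\int_0^t\frac{l^{m,n}_s}{|l^{\cdot,n}_s|}dX^n_s$ with $L^m_t(\omega)=\boldsymbol{L}^m_t(\omega,Y(\omega))$, $l^{m,n}=dL^{m,n}/dH$, $0/0=0$; (2) if $Y^m_t(\omega)=0$ or $Y^m_{t-}(\omega)=0$, then $L^m_s(\omega)=L^m_{t-}(\omega)$ and $Y^m_s(\omega)=0$ for all $s\ge t$. Relative wealth: $r^m_t=Y^m_t/|Y_t|$ ($:=0$ if $|Y_t|=0$). A strategy is relative growth optimal for investor $m$ if for any feasible initial wealth and strategy profile in which investor $m$ uses it, $Y^m_t>0$ for all $t\ge0$ and $\ln r^m$ is a submartingale. In the growth-rate inequality, $\ln 0:=-\infty$. *)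

From HB Require Import structures.
From mathcomp Require Import all_boot all_order all_algebra.
From mathcomp Require Import all_classical all_reals all_analysis measurable_realfun.
Set Implicit Arguments. Unset Strict Implicit. Unset Printing Implicit Defensive.
Import Order.TTheory GRing.Theory Num.Def Num.Theory.
Import numFieldTopology.Exports.
Local Open Scope classical_set_scope.
Local Open Scope ring_scope.

Section Paths.
Context {R : realType}.

Definition mkcumul (f : R -> R) : cumulative R R :=
  match pselect ({homo f : x y / x <= y} /\ right_continuous f) with
  | left h => HB.pack f (isCumulative.Build R _ R f (proj1 h) (proj2 h))
  | right _ => [the cumulative R R of (@idfun R)]
  end.

Definition pathmu (f : R -> R) := lebesgue_stieltjes_measure (mkcumul (fun t => f (Num.max t 0))).

Definition cadlag (f : R -> R) :=
  (forall t, 0 <= t -> f @ at_right t --> f t) /\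
  (forall t, 0 < t -> cvg (f @ at_left t)).

Definition leftlim (f : R -> R) (t : R) : R :=
  if 0 < t then lim (f @ at_left t) else f 0.

Definition Rp : set R := `[0, +oo[%classic.
Definition Ioc0 (t : R) : set R := `]0, t]%classic.
Definition lnE (x : R) : \bar R := if 0 < x then (ln x)%:E else -oo%E.

Lemma cadlag_cst (c : R) : cadlag (fun _ : R => c).
Proof. by split=> t _; [exact: cvg_cst | apply/cvg_ex; exists c; exact: cvg_cst]. Qed.
Definition limsup_at_infty (g : R -> \bar R) : \bar R :=
  limf_esup g (pinfty_nbhs R).
End Paths.

Section Market.
Context {R : realType} {d : measure_display} {Omega : measurableType d}.
Variable P : probability Omega R.
Variable F : R -> set (set Omega).
(** M investors, N assets *)
Variables M N : nat.

Definition usual_filtration : Prop :=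
  [/\ (forall t, 0 <= t -> sigma_algebra setT (F t)),
      (forall t, 0 <= t -> F t `<=` measurable),
      (forall s t, 0 <= s -> s <= t -> F s `<=` F t),
      (forall A, P.-negligible A -> F 0 A) &
      (forall t, 0 <= t -> F t = \bigcap_(s in `]t, +oo[) F s)].

Definition adapted (Z : Omega -> R -> R) : Prop :=
  forall t, 0 <= t -> forall B : set R, measurable B ->
    F t [set w | B (Z w t)].

Definition OmR : set (Omega * R) := [set z | 0 <= z.2].

Definition predictable_gen : set (set (Omega * R)) :=
  [set A | exists (Z : Omega -> R -> R) (B : set R),
     [/\ adapted Z, (forall w t, 0 < t -> Z w @ at_left t --> Z w t),
         measurable B & A = OmR `&` [set z | B (Z z.1 z.2)]]].

Definition Pred : set (set (Omega * R)) := <<s OmR, predictable_gen >>.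

Definition predictable (Z : Omega -> R -> R) : Prop :=
  forall B : set R, measurable B -> Pred (OmR `&` [set z | B (Z z.1 z.2)]).

Definition PL (L : Omega -> R -> R) (A : set (Omega * R)) : \bar R :=
  (\int[P]_w \int[pathmu (L w)]_(t in Rp) (\1_A (w, t))%:E)%E.

Definition PLw (L : Omega -> R -> R) (A : set (Omega * R))
    (l : Omega -> R -> R) : \bar R :=
  (\int[P]_w \int[pathmu (L w)]_(t in Rp) (\1_A (w, t) * l w t)%:E)%E.

Definition pdominated (G H : Omega -> R -> R) : Prop :=
  forall A, Pred A -> PL H A = 0%E -> PL G A = 0%E.

(** l is a predictable version of the Lebesgue derivative dL/dH of P (x) L
    w.r.t. P (x) H on the predictable sigma-algebra (Lebesgue decomposition:
    P (x) L (A) = int_A l d(P (x) H) + (singular part carried by S)) *)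
Definition is_dLdH (L H l : Omega -> R -> R) : Prop :=
  [/\ (forall w t, 0 <= l w t), predictable l &
      exists S, [/\ Pred S, PL H S = 0%E &
        forall A, Pred A -> PL L (A `\` S) = PLw H A l]].

Definition ndcadlag (f : R -> R) : Prop :=
  {in Rp &, {homo f : x y / x <= y}} /\ cadlag f.

Definition payoff (X : Omega -> R -> 'I_N -> R) : Prop :=
  forall n, [/\ adapted (fun w t => X w t n),
     (forall w, X w 0 n = 0), (forall w t, 0 <= t -> 0 <= X w t n) &
     (forall w, ndcadlag (fun t => X w t n))].

Definition jump (f : R -> R) (s : R) : R := f s - leftlim f s.

Definition contpart (f : R -> R) (t : R) : R :=
  f t - fine (\esum_(s in Ioc0 t) (jump f s)%:E)%E.

(** (|x| /\ 1) * mu_t = sum_{0<s<=t} (|Delta X_s| /\ 1) *)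
Definition jumpsum (X : Omega -> R -> 'I_N -> R) (w : Omega) (t : R) : R :=
  fine (\esum_(s in Ioc0 t)
          (Num.min (\sum_n `|jump (fun u => X w u n) s|) 1)%:E)%E.

(** B = (|x| /\ 1) * nu: the compensator (dual predictable projection) of
    the increasing process A *)
Definition compensator (A B : Omega -> R -> R) : Prop :=
  [/\ predictable B, (forall w, B w 0 = 0), (forall w, ndcadlag (B w)) &
      forall W : Omega -> R -> R, predictable W -> (forall w t, 0 <= W w t) ->
        PLw A setT W = PLw B setT W].

(** G_t = |X^c_t| + (|x| /\ 1) * nu_t *)
Definition Gproc (X : Omega -> R -> 'I_N -> R) (B : Omega -> R -> R)
    (w : Omega) (t : R) : R :=
  \sum_n contpart (fun u => X w u n) t + B w t.

Definition Dprop (y : R -> 'I_M -> R) : Prop :=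
  (forall t i, 0 <= t -> 0 <= y t i) /\ (forall i, cadlag (fun t => y t i)).

Definition Dpath := {y : R -> 'I_M -> R | Dprop y}.

Lemma Dprop0 : Dprop (fun _ _ => 0).
Proof. by split=> [t i _|i]; [exact: lexx | exact: cadlag_cst]. Qed.

Definition toD (y : R -> 'I_M -> R) : Dpath :=
  match pselect (Dprop y) with
  | left h => exist _ y h
  | right _ => exist _ (fun _ _ => 0) Dprop0
  end.

Definition Dsig (t : R) : set (set Dpath) :=
  <<s [set C | exists u (i : 'I_M) (B : set R),
          [/\ 0 <= u, u <= t, measurable B &
              C = [set y : Dpath | B (proj1_sig y u i)]]] >>.

Definition Esig (t : R) : set (set (Omega * Dpath)) :=
  <<s [set C | exists A D, [/\ F t A, Dsig t D & C = A `*` D]] >>.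

Definition ER : set ((Omega * Dpath) * R) := [set z | 0 <= z.2].

Definition PE : set (set ((Omega * Dpath) * R)) :=
  <<s ER, [set C | exists (Z : Omega -> Dpath -> R -> R) (B : set R),
     [/\ (forall w y t, 0 < t -> Z w y @ at_left t --> Z w y t),
         (forall t, 0 <= t -> forall B', measurable B' ->
             Esig t [set e | B' (Z e.1 e.2 t)]),
         measurable B &
         C = ER `&` [set z | B (Z z.1.1 z.1.2 z.2)]]] >>.

Definition strategy (L : Omega -> Dpath -> R -> 'I_N -> R) : Prop :=
  forall n,
  [/\ (forall B : set R, measurable B ->
         PE (ER `&` [set z | B (L z.1.1 z.1.2 z.2 n)])),
      (forall w y, L w y 0 n = 0),
      (forall w y t, 0 <= t -> 0 <= L w y t n) &
      (forall w y, ndcadlag (fun t => L w y t n))].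

Definition solves (X : Omega -> R -> 'I_N -> R)
    (Ls : 'I_M -> Omega -> Dpath -> R -> 'I_N -> R) (y0 : 'I_M -> R)
    (Y : Omega -> R -> 'I_M -> R) : Prop :=
  let L m n w t := Ls m w (toD (Y w)) t n in
  [/\ (forall w t m, 0 <= t -> 0 <= Y w t m),
      (forall w m, cadlag (fun t => Y w t m)),
      (forall m, adapted (fun w t => Y w t m)) &
  exists (H : Omega -> R -> R) (l : 'I_M -> 'I_N -> Omega -> R -> R),
  [/\ predictable H /\ (forall w, ndcadlag (H w)),
      (exists B, compensator (jumpsum X) B /\ pdominated (Gproc X B) H),
      (forall m n, is_dLdH (L m n) H (l m n)),
      (forall m, {ae P, forall w, forall t, 0 <= t ->
         Y w t m = y0 m - \sum_n L m n w t
           + \sum_n fine (\int[pathmu (fun s => X w s n)]_(s in Ioc0 t)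
                (l m n w s / \sum_k l k n w s)%:E)%E}) &
      (forall w m t, 0 <= t ->
         Y w t m = 0 \/ leftlim (fun u => Y w u m) t = 0 ->
         forall s, t <= s ->
           (forall n, L m n w s = leftlim (L m n w) t) /\ Y w s m = 0)]].

Definition feasible X Ls y0 : Prop :=
  [/\ (forall m, strategy (Ls m)), (forall m, 0 < y0 m),
      (exists Y, solves X Ls y0 Y) &
      (forall Y Y', solves X Ls y0 Y -> solves X Ls y0 Y' ->
         {ae P, forall w, forall t, 0 <= t -> Y w t = Y' w t})].

Definition relwealth (Y : Omega -> R -> 'I_M -> R) (m : 'I_M) w t : R :=
  let s := \sum_i Y w t i in if s == 0 then 0 else Y w t m / s.

Definition submartingale (Z : Omega -> R -> \bar R) : Prop :=
  [/\ (forall t, 0 <= t -> forall B : set (\bar R), measurable B ->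
         F t [set w | B (Z w t)]),
      (forall t, 0 <= t -> P.-integrable setT (fun w => Z w t)) &
      (forall s t, 0 <= s -> s <= t -> forall A, F s A ->
         (\int[P]_(w in A) Z w s <= \int[P]_(w in A) Z w t)%E)].

Definition relative_growth_optimal X (L : Omega -> Dpath -> R -> 'I_N -> R)
    (m : 'I_M) : Prop :=
  strategy L /\
  forall Ls y0, Ls m = L -> feasible X Ls y0 ->
  forall Y, solves X Ls y0 Y ->
    {ae P, forall w, forall t, 0 <= t -> 0 < Y w t m} /\
    submartingale (fun w t => lnE (relwealth Y m w t)).

End Market.

From HB Require Import structures.
From mathcomp Require Import all_boot all_order all_algebra.
From mathcomp Require Import all_classical all_reals all_analysis measurable_realfun.
From mathcomp.algebra_tactics Require Import ring lra.
Import Order.TTheory GRing.Theory Num.Def Num.Theory.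
Import numFieldTopology.Exports.
Local Open Scope classical_set_scope.
Local Open Scope ring_scope.

(* Relative growth optimality gives Y^m > 0 a.s. and makes S := ln r^m a
   submartingale; since r^m <= 1, S is moreover nonpositive.
   1. Maximal inequality: for a nonpositive submartingale S, a level lam > 0
      and times t_0 <= ... <= t_n, lam * P(min_i S_(t_i) <= -lam) <= -E S_(t_0).
      It is proved by induction on n, applying the submartingale property on
      the event where S has not yet fallen below -lam.
   2. Along the increasing dyadic grids {i / 2^n : i <= n 2^n}, continuity
      from below turns this into P(S_t <= -lam at some dyadic t) <= c / lam;
      hence a.s. S does not reach every level -lam at dyadic times.
   3. Pathwise, r^m is right-continuous while Y^m > 0, so inf_t r^m_t = 0
      forces S below every level at some dyadic time: inf_t r^m_t > 0 a.s.
   4. Pathwise, r^m >= rho > 0 gives Y^k <= Y^m / rho, so the growth rates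
      satisfy (1/t) ln Y^k <= (1/t) ln Y^m - (ln rho) / t, and the limsup
      comparison follows. *)

Definition below {T : Type} {R : realType} (S : T -> R -> \bar R) (lam t : R) :
    set T :=
  [set w | (S w t <= (- lam)%:E)%E].

(* The event that S reaches the level -lam at one of the times tt 0 .. tt n;
   the recursion on the first time drives the maximal inequality. *)
Fixpoint hits_below {T : Type} {R : realType} (S : T -> R -> \bar R) (lam : R)
    (n : nat) (tt : nat -> R) : set T :=
  match n with
  | 0 => below S lam (tt 0%N)
  | n.+1 => below S lam (tt 0%N) `|` hits_below S lam n (fun i => tt i.+1)
  end.

Lemma hits_belowP {T : Type} {R : realType} (S : T -> R -> \bar R) lam n tt w :
  hits_below S lam n tt w <-> exists2 i, (i <= n)%N & below S lam (tt i) w.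
Proof.
elim: n tt => [|n IH] tt /=.
  by split=> [h|[i]]; [exists 0%N|rewrite leqn0 => /eqP ->].
split=> [[h|/IH [i ni h]]|[[|i]]]; first by exists 0%N.
- by exists i.+1.
- by move=> _ h; left.
- by move=> ni h; right; apply/IH; exists i.
Qed.

Lemma setI_first_split {T : Type} (C A B : set T) :
  C `&` (A `|` B) = (C `&` A) `|` ((C `&` ~` A) `&` B).
Proof.
apply/seteqP; split=> w /=.
  move=> [Cw [Aw|Bw]]; first by left.
  by have [Aw|nAw] := pselect (A w); [left|right].
by move=> [[Cw Aw]|[[Cw _] Bw]]; split=> //; [left|right].
Qed.

Definition dyadic {R : realType} (n i : nat) : R := i%:R / 2%:R ^+ n.

Lemma dyadic_ge0 {R : realType} n i : 0 <= dyadic n i :> R.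
Proof. by rewrite /dyadic divr_ge0 // exprn_ge0. Qed.

Lemma dyadic_le_succ {R : realType} n i : dyadic n i <= dyadic n i.+1 :> R.
Proof. by rewrite /dyadic ler_pM2r ?invr_gt0 ?exprn_gt0 // ler_nat. Qed.

Lemma dyadic_double {R : realType} n i : dyadic n.+1 (2 * i) = dyadic n i :> R.
Proof.
rewrite /dyadic exprS natrM.
have h : (2%:R ^+ n : R) != 0 by rewrite expf_neq0 // pnatr_eq0.
by field; rewrite h.
Qed.

Lemma dyadic_right_dense {R : realType} {t δ : R} : 0 <= t -> 0 < δ ->
  exists n i, [/\ (i <= n * 2 ^ n)%N, t < dyadic n i & dyadic n i < t + δ].
Proof.
move=> t0 d0; set u := δ^-1.
have u0 : 0 < u by rewrite /u invr_gt0.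
have du : δ * u = 1 by rewrite /u mulfV // gt_eqF.
set n := (truncn (t + 1 + u)).+1.
have hn : t + 1 + u < n%:R by exact: truncnS_gt.
set q : R := 2%:R ^+ n.
have hq : n%:R < q by rewrite /q -natrX ltr_nat ltn_expl.
have q0 : 0 < q by rewrite /q exprn_gt0.
have q1 : 1 <= q by rewrite /q exprn_ege1 // ler1n.
set i := (truncn (t * q)).+1.
have hi1 : t * q < i%:R by exact: truncnS_gt.
have hi2 : i%:R <= t * q + 1.
  by rewrite /i -natr1 lerD2r truncn_le mulr_ge0 // ltW.
exists n, i; split; rewrite /dyadic -/q.
- rewrite -(ler_nat R) natrM natrX -/q.
  have : (t + 1) * q <= n%:R * q by rewrite ler_pM2r //; lra.
  lra.
- by rewrite ltr_pdivlMr.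
- rewrite ltr_pdivrMr //.
  have : u * δ < n%:R * δ by rewrite ltr_pM2r //; lra.
  have : n%:R * δ < q * δ by rewrite ltr_pM2r.
  lra.
Qed.

Definition dyadic_hit {T : Type} {R : realType} (S : T -> R -> \bar R) (lam : R)
    (n : nat) : set T :=
  hits_below S lam (n * 2 ^ n) (dyadic n).

Lemma dyadic_hitP {T : Type} {R : realType} (S : T -> R -> \bar R) lam n w :
  dyadic_hit S lam n w <->
  exists2 i, (i <= n * 2 ^ n)%N & below S lam (dyadic n i) w.
Proof. exact: hits_belowP. Qed.

Lemma dyadic_hit_incr {T : Type} {R : realType} (S : T -> R -> \bar R) lam :
  {homo dyadic_hit S lam : n k / (n <= k)%N >-> (n <= k)%O}.
Proof.
have hitS n : dyadic_hit S lam n `<=` dyadic_hit S lam n.+1.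
  move=> w /dyadic_hitP [i ni h]; apply/dyadic_hitP; exists (2 * i)%N.
    rewrite expnS mulnCA; apply: leq_mul => //; apply: leq_trans ni _.
    by rewrite leq_mul2r leqnSn orbT.
  by rewrite dyadic_double.
move=> n k nk; apply/subsetPset; rewrite -(subnKC nk).
elim: (k - n)%N => [|j IH]; first by rewrite addn0.
by move=> w /IH; rewrite addnS; apply: hitS.
Qed.

Lemma measure_small_eq0 {d : measure_display} {T : measurableType d}
    {R : realType} (mu : {measure set T -> \bar R}) (A : set T) (c : R) :
  (forall j : nat, (mu A <= (c / j.+1%:R)%:E)%E) -> mu A = 0%E.
Proof.
move=> small; have A_ge0 := measure_ge0 mu A.
have Afin : mu A \is a fin_num.
  by rewrite ge0_fin_numE // (le_lt_trans (small 0%N)) ?ltry.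
apply/eqP; rewrite -(fineK Afin) eqe eq_le fine_ge0 // andbT leNgt.
apply/negP => Apos; set a := fine (mu A) in Apos.
have := small (truncn (c / a)); rewrite -(fineK Afin) lee_fin -/a.
rewrite ler_pdivlMr ?ltr0Sn // => hle.
have := truncnS_gt (c / a); rewrite ltr_pdivrMr // mulrC; lra.
Qed.

Section MaximalInequality.
Context {R : realType} {d : measure_display} {Omega : measurableType d}.
Variables (P : probability Omega R) (F : R -> set (set Omega)).
Variable S : Omega -> R -> \bar R.
Hypothesis F_usual : usual_filtration P F.
Hypothesis S_submartingale : submartingale P F S.
Hypothesis S_le0 : forall w t, 0 <= t -> (S w t <= 0)%E.

Let F_meas {t A} : 0 <= t -> F t A -> measurable A.
Proof. by move=> t0; case: F_usual => _ /(_ t t0) + _ _ _; apply. Qed.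

Let F_mono {s t} : 0 <= s -> s <= t -> F s `<=` F t.
Proof. by case: F_usual => _ _ + _ _; apply. Qed.

Let F_setT {t} : 0 <= t -> F t setT.
Proof.
move=> t0; case: F_usual => /(_ t t0) [G0 GC _] _ _ _ _.
by have := GC _ G0; rewrite setD0.
Qed.

Let F_setC {t A} : 0 <= t -> F t A -> F t (~` A).
Proof.
by move=> t0; case: F_usual => /(_ t t0) [_ + _] _ _ _ _; rewrite -setTD; apply.
Qed.

Let F_setI {t A B} : 0 <= t -> F t A -> F t B -> F t (A `&` B).
Proof.
move=> t0; case: F_usual => /(_ t t0) sigma _ _ _ _.
by have [_ _ _] := (sigma_algebraP (fun X _ => @subsetT _ X)).1 sigma; apply.
Qed.

Let S_int {t} : 0 <= t -> P.-integrable setT (fun w => S w t).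
Proof. by case: S_submartingale => _ + _; apply. Qed.

Let S_sub {s t} : 0 <= s -> s <= t -> forall A, F s A ->
  (\int[P]_(w in A) S w s <= \int[P]_(w in A) S w t)%E.
Proof. by case: S_submartingale => _ _; apply. Qed.

Lemma F_below lam {t} : 0 <= t -> F t (below S lam t).
Proof.
move=> t0; case: S_submartingale => /(_ t t0) adapted _ _.
have := adapted _ (emeasurable_itv `]-oo, (- lam)%:E]).
by congr (F t _); apply/seteqP; split=> w /=; rewrite in_itv.
Qed.

Lemma measurable_hits_below lam n tt : (forall i, 0 <= tt i) ->
  measurable (hits_below S lam n tt).
Proof.
have mA u : (forall i, 0 <= u i) -> measurable (below S lam (u 0%N)).
  by move=> u_ge0; exact: F_meas (u_ge0 0%N) (F_below _ (u_ge0 0%N)).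
elim: n tt => [|n IH] tt tt_ge0 /=; first exact: mA.
by apply: measurableU; [exact: mA | apply: IH => i; exact: tt_ge0].

Qed.

Lemma measurable_dyadic_hit lam n : measurable (dyadic_hit S lam n).
Proof. by apply: measurable_hits_below => i; exact: dyadic_ge0. Qed.

Lemma integral_le_cst t A (c : R) : 0 <= t -> measurable A ->
  (forall w, A w -> (S w t <= c%:E)%E) ->
  (\int[P]_(w in A) S w t <= c%:E * P A)%E.
Proof.
move=> t0 mA le_c; rewrite -(integral_cst P mA).
apply: le_integral => //; first exact: integrableS (S_int t0).
- exact: finite_measure_integrable_cst.
- by move=> w /[!inE] /le_c.
Qed.

Lemma integral_split_below lam {t C} : 0 <= t -> F t C ->
  (\int[P]_(w in C) S w t <= (- lam)%:E * P (C `&` below S lam t)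
     + \int[P]_(w in C `&` ~` below S lam t) S w t)%E.
Proof.
move=> t0 FC; set A := below S lam t.
have mCA : measurable (C `&` A) := F_meas t0 (F_setI t0 FC (F_below lam t0)).
have mCA' : measurable (C `&` ~` A).
  exact: F_meas t0 (F_setI t0 FC (F_setC t0 (F_below lam t0))).
rewrite -{1}(setIT C) -(setUv A) setIUr integral_setU //; first last.
- by apply/disj_setPS => w [[_ a] [_ na]].
- apply: (measurable_funS measurableT) => //.
  exact: measurable_int (S_int t0).
apply: leeD; last exact: lexx.
by apply: integral_le_cst => // w [].
Qed.

Lemma maximal_inequality lam n : forall tt : nat -> R, 0 <= tt 0%N ->
  (forall i, tt i <= tt i.+1) -> forall C, F (tt 0%N) C ->
  (\int[P]_(w in C) S w (tt 0%N)
     <= (- lam)%:E * P (C `&` hits_below S lam n tt))%E.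
Proof.
elim: n => [|n IH] tt t0 tt_incr C FC /=.
  apply: le_trans (integral_split_below lam t0 FC) _.
  rewrite -[leRHS]adde0; apply: leeD; first exact: lexx.
  rewrite -(mul0e (P (C `&` ~` below S lam (tt 0%N)))).
  apply: integral_le_cst => //; last by move=> w _; exact: S_le0.
  exact: F_meas t0 (F_setI t0 FC (F_setC t0 (F_below lam t0))).
have tt_ge0 i : 0 <= tt i by elim: i => // i; move/le_trans; apply.
set A := below S lam (tt 0%N).
have FCA' : F (tt 0%N) (C `&` ~` A).
  exact: F_setI t0 FC (F_setC t0 (F_below lam t0)).
have mCA : measurable (C `&` A) := F_meas t0 (F_setI t0 FC (F_below lam t0)).
have mH : measurable (hits_below S lam n (fun i => tt i.+1)).
  by apply: measurable_hits_below => i; exact: tt_ge0.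
rewrite setI_first_split measureU //; first last.
- by apply/seteqP; split=> w // [[_ Aw] [[_ nAw] _]].
- exact: measurableI (F_meas t0 FCA') mH.
rewrite muleDr //; last by rewrite ge0_adde_def // inE.
apply: le_trans (integral_split_below lam t0 FC) _.
apply: leeD; first exact: lexx.
apply: le_trans (S_sub t0 (tt_incr 0%N) _ FCA') _.
apply: (IH (fun i => tt i.+1)) (tt_ge0 1%N) _ _ _ => //.
exact: F_mono t0 (tt_incr 0%N) _ FCA'.
Qed.

Definition initial_deficit : R := - fine (\int[P]_(w in setT) S w 0)%E.

Lemma dyadic_hit_bound lam n : 0 < lam ->
  (P (dyadic_hit S lam n) <= (initial_deficit / lam)%:E)%E.
Proof.
move=> lam0; have dy0 : dyadic n 0 = 0 :> R by rewrite /dyadic mul0r.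
have := maximal_inequality lam (n * 2 ^ n) (dyadic n) (dyadic_ge0 n 0)
  (dyadic_le_succ n).
rewrite dy0 => /(_ setT (F_setT (lexx 0))).
rewrite setTI -/(dyadic_hit S lam n).
have Sfin : (\int[P]_(w in setT) S w 0)%E \is a fin_num.
  exact: integrable_fin_num (S_int (lexx 0)).
have Pfin : P (dyadic_hit S lam n) \is a fin_num.
  exact: fin_num_measure (measurable_dyadic_hit lam n).
rewrite -(fineK Sfin) -(fineK Pfin) -EFinM !lee_fin => h.
by rewrite ler_pdivlMr // /initial_deficit; lra.
Qed.

Lemma dyadic_hit_union_bound lam : 0 < lam ->
  (P (\bigcup_n dyadic_hit S lam n) <= (initial_deficit / lam)%:E)%E.
Proof.
move=> lam0; have mU : measurable (\bigcup_n dyadic_hit S lam n).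
  by apply: bigcupT_measurable => n; exact: measurable_dyadic_hit.
have cvgP := nondecreasing_cvg_mu (mu := P) (measurable_dyadic_hit lam) mU
  (dyadic_hit_incr S lam).
rewrite -(cvg_lim _ cvgP) //; apply: lime_le.
  by apply/cvg_ex; eexists; exact: cvgP.
by apply: nearW => n; exact: dyadic_hit_bound.
Qed.

Lemma dyadic_hit_all_levels_ae :
  {ae P, forall w, ~ (forall j : nat, exists n, dyadic_hit S j.+1%:R n w)}.
Proof.
set N0 := \bigcap_j \bigcup_n dyadic_hit S j.+1%:R n.
have mN0 : measurable N0.
  apply: bigcapT_measurable => j; apply: bigcupT_measurable => n.
  exact: measurable_dyadic_hit.
have PN0 : P N0 = 0%E.
  apply: (measure_small_eq0 P N0 initial_deficit) => j.
  apply: le_trans _ (dyadic_hit_union_bound j.+1%:R (ltr0Sn _ j)).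
  apply: le_measure; rewrite ?inE //; last by move=> w /(_ j I).
  by apply: bigcupT_measurable => n; exact: measurable_dyadic_hit.
exists N0; split => // w /= /contrapT hit j _.
by have [n hn] := hit j; exists n.
Qed.

End MaximalInequality.

Lemma limsup_le_eventually {R : realType} (f g : R -> \bar R) :
  (forall e : R, 0 < e ->
     exists T : R, forall t, T < t -> (f t <= g t + e%:E)%E) ->
  (limsup_at_infty f <= limsup_at_infty g)%E.
Proof.
move=> h; rewrite /limsup_at_infty /limf_esup.
apply: le_ereal_inf_tmp => _ [V FV <-].
apply/lee_addgt0Pr => e e0; have [T HT] := h e e0.
have FVT : pinfty_nbhs R (V `&` [set t | T < t]).
  case: FV => M [Mr HM]; exists (Num.max M T); split; first exact: num_real.
  by move=> x; rewrite gt_max => /andP [Mx Tx]; split; [exact: HM|].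
apply: le_trans (ereal_inf_lbound _) _; first by exists (V `&` [set t | T < t]).
apply: ge_ereal_sup => _ [t [Vt Tt] <-].
apply: le_trans (HT t Tt) _; rewrite leeD2r //.
by apply: ereal_sup_ubound; exists t.
Qed.

Lemma sum_ge_term {R : realType} {M : nat} (y : 'I_M -> R) (m : 'I_M) :
  (forall i, 0 <= y i) -> y m <= \sum_i y i.
Proof. by move=> y0; rewrite (bigD1 m) //= lerDl sumr_ge0. Qed.

Section RelativeWealth.
Context {R : realType} {d : measure_display} {Omega : measurableType d}.
Context {M : nat}.
Variables (Y : Omega -> R -> 'I_M -> R) (m : 'I_M) (w : Omega).
Hypothesis Y_ge0 : forall t i, 0 <= t -> 0 <= Y w t i.

Lemma relwealth_le1 t : 0 <= t -> relwealth Y m w t <= 1.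
Proof.
move=> t0; rewrite /relwealth; case: ifP => [_|hs]; first exact: ler01.
have hs' : 0 < \sum_i Y w t i.
  by rewrite lt_def hs sumr_ge0 // => i _; exact: Y_ge0.
by rewrite ler_pdivrMr // mul1r sum_ge_term // => i; exact: Y_ge0.
Qed.

Lemma ln_relwealth_le0 t : 0 <= t -> (lnE (relwealth Y m w t) <= 0)%E.
Proof.
move=> t0; rewrite /lnE; case: ifP => _; last exact: leNye.
by rewrite lee_fin ln_le0 // relwealth_le1.
Qed.

Hypothesis Ym_gt0 : forall t, 0 <= t -> 0 < Y w t m.

Lemma total_wealth_gt0 {t} : 0 <= t -> 0 < \sum_i Y w t i.
Proof.
move=> t0; apply: lt_le_trans (Ym_gt0 _ t0) _.
exact: sum_ge_term _ _ (Y_ge0 t ^~ t0).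
Qed.

Lemma relwealthE {t} : 0 <= t -> relwealth Y m w t = Y w t m / \sum_i Y w t i.
Proof. by move=> t0; rewrite /relwealth gt_eqF // total_wealth_gt0. Qed.

Hypothesis Y_cadlag : forall i, cadlag (fun t => Y w t i).

(* Right continuity of r^m: a value below eps persists to the right. *)
Lemma relwealth_lt_right {t eps} : 0 <= t -> relwealth Y m w t < eps ->
  exists2 e, 0 < e & forall s, t < s < t + e -> relwealth Y m w s < eps.
Proof.
move=> t0; have hs := total_wealth_gt0 t0.
rewrite relwealthE // ltr_pdivrMr // => hlt.
pose g s := eps * \sum_i Y w s i - Y w s m.
have gc : g s @[s --> at_right t] --> g t.
  apply: cvgB; last exact: (Y_cadlag m).1.
  apply: cvgMl_tmp; apply: cvg_big => //; first exact: add_continuous.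
  by move=> i _; exact: (Y_cadlag i).1.
have gt0 : 0 < g t by rewrite /g subr_gt0.
have : nbhs t (fun s => t < s -> 0 < g s).
  exact: (cvgr_gt (F := at_right t) (g t) gc 0 gt0).
move=> /nbhs_ballP [e /= e0 He]; exists e => // s /andP [ts tse].
have s0 : 0 <= s by lra.
rewrite relwealthE // ltr_pdivrMr ?total_wealth_gt0 // -subr_gt0.
by apply: He => //; rewrite /ball /= ltr_distlC; apply/andP; split; lra.
Qed.

Lemma relwealth_inf0_dyadic_hit lam : 0 < lam ->
  ~ (0 < ereal_inf [set (relwealth Y m w t)%:E | t in Rp])%E ->
  exists n, dyadic_hit (fun w t => lnE (relwealth Y m w t)) lam n w.
Proof.
move=> lam0 ninf; set eps := expR (- lam).
have : (ereal_inf [set (relwealth Y m w t)%:E | t in Rp] < eps%:E)%E.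
  apply: le_lt_trans (_ : _ <= 0%E)%E _; last by rewrite lte_fin expR_gt0.
  by rewrite leNgt; exact/negP.
move=> /ereal_inf_lt [_ [t Rpt <-]]; rewrite lte_fin => rlt.
have t0 : 0 <= t by move: Rpt; rewrite /Rp /= in_itv /= andbT.
have [e e0 He] := relwealth_lt_right t0 rlt.
have [n [i [ni ti tie]]] := dyadic_right_dense t0 e0.
exists n; apply/dyadic_hitP; exists i => //.
have dy0 : 0 <= dyadic n i :> R := dyadic_ge0 n i.
have rpos : 0 < relwealth Y m w (dyadic n i).
  by rewrite relwealthE // divr_gt0 ?Ym_gt0 ?total_wealth_gt0.
rewrite /below /= /lnE rpos lee_fin; apply: ltW.
by rewrite -(expRK (- lam)) ltr_ln ?posrE ?expR_gt0 // He ?ti.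
Qed.

Lemma relwealth_lower_bound :
  (0 < ereal_inf [set (relwealth Y m w t)%:E | t in Rp])%E ->
  exists2 rho, 0 < rho & forall t, 0 <= t -> rho <= relwealth Y m w t.
Proof.
set I := ereal_inf _ => I_gt0.
have I_le1 : (I <= 1%:E)%E.
  apply: le_trans (ereal_inf_lbound _) _.
    by exists 0 => //; rewrite /Rp /= in_itv /= lexx.
  by rewrite lee_fin relwealth_le1.
have [rho Irho] : exists rho : R, I = rho%:E.
  by move: I_gt0 I_le1; case: (I) => [r _ _|_ //|//]; exists r.
exists rho; first by rewrite -lte_fin -Irho.
move=> t t0; rewrite -lee_fin -Irho; apply: ereal_inf_lbound; exists t => //.
by rewrite /Rp /= in_itv /= t0.
Qed.

(* Growth-rate comparison: a uniform lower bound rho on r^m bounds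
   (1/t) ln Y^k by (1/t) ln Y^m + (- ln rho) / t. *)
Lemma growth_rate_le k :
  (0 < ereal_inf [set (relwealth Y m w t)%:E | t in Rp])%E ->
  (limsup_at_infty (fun t : R => lnE (Y w t k) * (t^-1)%:E)
   <= limsup_at_infty (fun t : R => lnE (Y w t m) * (t^-1)%:E))%E.
Proof.
move=> /relwealth_lower_bound [rho rho0 rho_le].
have lnrho : ln rho <= 0.
  by rewrite ln_le0 // (le_trans (rho_le 0 (lexx 0))) ?relwealth_le1.
apply: limsup_le_eventually => e e0.
exists (Num.max 0 (- ln rho / e)) => t; rewrite gt_max => /andP [t0 tT].
have t0' : 0 <= t := ltW t0.
have ut : 0 < t^-1 by rewrite invr_gt0.
rewrite /lnE Ym_gt0 //.
have [hk|hk] := ltP 0 (Y w t k); last by rewrite gt0_mulNye ?lte_fin // leNye.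
rewrite -!EFinM -EFinD lee_fin.
have Yk_le : Y w t k <= Y w t m / rho.
  apply: le_trans (sum_ge_term _ k (Y_ge0 t ^~ t0')) _.
  have := rho_le t t0'; rewrite relwealthE // ler_pdivlMr ?total_wealth_gt0 //.
  by rewrite ler_pdivlMr // mulrC.
have := Yk_le; rewrite -ler_ln ?posrE ?divr_gt0 ?Ym_gt0 //.
rewrite lnM ?posrE ?invr_gt0 ?Ym_gt0 // lnV ?posrE // => ln_le.
have h2 : ln (Y w t k) * t^-1 <= (ln (Y w t m) - ln rho) * t^-1.
  by rewrite ler_pM2r.
have h3 : - ln rho < t * e by rewrite -ltr_pdivrMr.
have h4 : - ln rho / t < e by rewrite ltr_pdivrMr // mulrC.
lra.
Qed.

End RelativeWealth.

Theorem mainTheorem9 (R : realType) (d : measure_display)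
  (Omega : measurableType d) (P : probability Omega R)
  (F : R -> set (set Omega)) (M N : nat)
  (X : Omega -> R -> 'I_N -> R)
  (L : Omega -> Dpath M -> R -> 'I_N -> R) (m : 'I_M) :
  (2 <= M)%N -> (1 <= N)%N ->
  usual_filtration P F -> payoff F X ->
  relative_growth_optimal P F X L m ->
  forall (Ls : 'I_M -> Omega -> Dpath M -> R -> 'I_N -> R) (y0 : 'I_M -> R),
  Ls m = L -> (forall i, 0 < y0 i) -> feasible P F X Ls y0 ->
  forall Y : Omega -> R -> 'I_M -> R, solves P F X Ls y0 Y ->
  {ae P, forall w, (0 < ereal_inf [set (relwealth Y m w t)%:E | t in Rp])%E} /\
  (forall k : 'I_M, {ae P, forall w,
     (limsup_at_infty (fun t : R => lnE (Y w t k) * (t^-1)%:E)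
      <= limsup_at_infty (fun t : R => lnE (Y w t m) * (t^-1)%:E))%E}).
Proof.
move=> _ _ F_usual _ [_ rgo] Ls y0 Lsm _ feas Y sol.
have [Ym_gt0 S_sub] := rgo Ls y0 Lsm feas Y sol.
have [Y_ge0 Y_cadlag _ _] := sol.
set S := fun w t => lnE (relwealth Y m w t).
have S_le0 w t : 0 <= t -> (S w t <= 0)%E.
  by apply: ln_relwealth_le0 => s i; exact: Y_ge0.
have survive : {ae P, forall w, (forall t, 0 <= t -> 0 < Y w t m) /\
    (0 < ereal_inf [set (relwealth Y m w t)%:E | t in Rp])%E}.
  move: Ym_gt0 (dyadic_hit_all_levels_ae _ _ _ F_usual S_sub S_le0).
  apply: filterS2 => w Ym_pos nohit; split => //.
  apply: contrapT => ninf; apply: nohit => j.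
  exact: relwealth_inf0_dyadic_hit (Y_ge0 w) Ym_pos (Y_cadlag w) _
    (ltr0Sn _ j) ninf.
split; first by move: survive; apply: filterS => w [].
move=> k; move: survive; apply: filterS => w [Ym_pos inf_gt0].
exact: growth_rate_le (Y_ge0 w) Ym_pos k inf_gt0.
Qed.
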